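(* Let $p$ be a prime, $\alpha\ge1$ and $\beta\ge0$. For every $p^\alpha$-periodic function $f:\mathbb{Z}\to\mathbb{Z}$ (equivalently $f:\mathbb{Z}_{p^\alpha}\to\mathbb{Z}$), $$p^\beta\ \text{ divides }\ \Delta^{(\beta(p-1)+1)p^{\alpha-1}}f(x)\quad\text{for all }x.$$
   Context: For a function $f$ on $\mathbb{Z}$ (or on $\mathbb{Z}_q$, viewed as a $q$-periodic function on $\mathbb{Z}$) with values in an additive group, the difference operator is $\Delta f(x):=f(x+1)-f(x)$, and $\Delta^k$ is its $k$-fold iterate. *)

From mathcomp Require Import all_boot all_order all_algebra.
Set Implicit Arguments. Unset Strict Implicit. Unset Printing Implicit Defensive.
Import Order.TTheory GRing.Theory Num.Theory.
Local Open Scope ring_scope.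

Definition Delta (f : int -> int) : int -> int := fun x => f (x + 1) - f x.

Definition Delta_iter (k : nat) (f : int -> int) : int -> int := iter k Delta f.

From mathcomp Require Import all_boot all_order all_algebra.
From mathcomp Require Import ring zify.
Set Implicit Arguments. Unset Strict Implicit. Unset Printing Implicit Defensive.
Import Order.TTheory GRing.Theory Num.Theory.
Local Open Scope ring_scope.

(* An integer polynomial P = \sum_i P_i X^i acts on functions
   Z -> Z by (P . f)(x) = \sum_i P_i f(x + i); this is a ring action in which
   X is the shift and X - 1 the difference operator, so Delta^m = (X - 1)^m.
   A p^alpha-periodic f is killed by X^(p^alpha) - 1, hence by the ideal it
   generates, so it suffices to show the polynomial identity
     (X - 1)^((beta(p-1)+1) q) = p^beta Q + (X^(q p) - 1) R,   q = p^(alpha-1).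
   This is pure algebra in the ideal (a^k, M) of a commutative ring:
   - (x - 1)^(p^j) = x^(p^j) - 1 mod p           (Frobenius, by induction on j);
   - (y - 1)^n lies in (p^k, y^p - 1) once n >= 1 + k(p-1), since
     (y - 1)^p = (y^p - 1) - p (y - 1) B;
   - expanding (y - 1 + p A)^(beta(p-1)+1) binomially, every term lies in
     (p^beta, y^p - 1).
   The theorem follows with x = X and y = X^q. *)

Definition pact (P : {poly int}) (f : int -> int) (x : int) : int :=
  \sum_(i < size P) P`_i * f (x + i%:Z).

Lemma pact_widen (P : {poly int}) (f : int -> int) (x : int) (n : nat) :
  (size P <= n)%N -> pact P f x = \sum_(i < n) P`_i * f (x + i%:Z).
Proof.
move=> Hn; rewrite /pact (big_ord_widen _ (fun i => P`_i * f (x + i%:Z)) Hn).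
rewrite [RHS](bigID (fun i : 'I_n => (i < size P)%N)) /=.
rewrite [X in _ = _ + X]big1 ?addr0 // => i; rewrite -leqNgt => Hi.
by rewrite nth_default // mul0r.
Qed.

Lemma pactD (P Q : {poly int}) (f : int -> int) (x : int) :
  pact (P + Q) f x = pact P f x + pact Q f x.
Proof.
set n := maxn (size (P + Q)) (maxn (size P) (size Q)).
rewrite (@pact_widen _ _ _ n) ?leq_maxl // (@pact_widen P _ _ n); last by lia.
rewrite (@pact_widen Q _ _ n); last by lia.
by rewrite -big_split /=; apply: eq_bigr => i _; rewrite coefD mulrDl.
Qed.

Lemma pactC (c : int) (P : {poly int}) (f : int -> int) (x : int) :
  pact (c%:P * P) f x = c * pact P f x.
Proof.
rewrite (@pact_widen _ _ _ (size P)); last by rewrite mul_polyC size_scale_leq.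
by rewrite /pact mulr_sumr; apply: eq_bigr => i _; rewrite coefCM mulrA.
Qed.

Lemma pact_const (c : int) (f : int -> int) (x : int) : pact c%:P f x = c * f x.
Proof.
rewrite (@pact_widen _ _ _ 1); last by rewrite size_polyC leq_b1.
by rewrite big_ord1 coefC /= addr0.
Qed.

Lemma pactMX (P : {poly int}) (f : int -> int) (x : int) :
  pact (P * 'X) f x = pact P f (x + 1).
Proof.
rewrite (@pact_widen _ _ _ (size P).+1); last first.
  by have [->|nzP] := eqVneq P 0; rewrite ?mul0r ?size_poly0 ?size_mulX.
rewrite big_ord_recl /= coefMX /= mul0r add0r /pact; apply: eq_bigr => i _.
rewrite coefMX /=; congr (_ * f _); rewrite /bump /= -addrA add1n; congr (_ + _).
Qed.

Lemma pactM (P Q : {poly int}) (f : int -> int) (x : int) :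
  pact (P * Q) f x = pact P (pact Q f) x.
Proof.
elim/poly_ind: P x => [|P c IH] x; first by rewrite mul0r /pact size_poly0 !big_ord0.
rewrite mulrDl -mulrA (mulrC 'X) mulrA pactD pactMX IH pactD pactMX.
by rewrite pactC pact_const.
Qed.

Lemma pact_Xn (n : nat) (f : int -> int) (x : int) : pact 'X^n f x = f (x + n%:Z).
Proof.
elim: n x => [|n IH] x; first by rewrite expr0 pact_const mul1r addr0.
by rewrite exprSr pactMX IH -addrA intS (addrC 1).
Qed.

Lemma pact_Delta (f : int -> int) (x : int) : pact ('X - 1) f x = Delta f x.
Proof.
by rewrite -polyCN pactD -{1}(mul1r 'X) pactMX !pact_const mul1r mulN1r.
Qed.

Lemma Delta_iter_pact (m : nat) (f : int -> int) (x : int) :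
  Delta_iter m f x = pact (('X - 1) ^+ m) f x.
Proof.
elim: m x => [|m IH] x; first by rewrite expr0 /Delta_iter /= pact_const mul1r.
by rewrite exprS pactM pact_Delta /Delta -!IH.
Qed.

Lemma pact_periodic (N : nat) (f : int -> int) (R : {poly int}) (x : int) :
  (forall y, f (y + N%:Z) = f y) -> pact (('X^N - 1) * R) f x = 0.
Proof.
move=> Hf; have Hzero y : pact ('X^N - 1) f y = 0.
  by rewrite -polyCN pactD pact_Xn pact_const Hf mulN1r subrr.
rewrite mulrC pactM; set g := pact _ f.
by rewrite /pact big1 // => i _; rewrite /g Hzero mulr0.
Qed.

Lemma exprD_prime (R : comNzRingType) (p : nat) (x y : R) : prime p ->
  exists C, (x + y) ^+ p = x ^+ p + y ^+ p + p%:R * (x * y * C).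
Proof.
case: p => [|[|n]] Hp //.
exists (\sum_(i < n.+1) x ^+ (n - i) * y ^+ i *+ ('C(n.+2, i.+1) %/ n.+2)).
rewrite exprDn big_ord_recl big_ord_recr /= subn0 bin0 binn subnn !mulr1n.
rewrite expr0 mulr1 mul1r !mulr_sumr -addrA; congr (_ + _); rewrite addrC; congr (_ + _).
apply: eq_bigr => i _; rewrite /bump /= add1n.
have Hd : (n.+2 %| 'C(n.+2, i.+1))%N.
  by apply: prime_dvd_bin => //; have := ltn_ord i; lia.
rewrite -{1}(divnK Hd) mulrnA mulr_natl mulrnAr; congr (_ *+ _ *+ _).
have -> : (n.+2 - i.+1 = (n - i).+1)%N by have := ltn_ord i; lia.
by rewrite !exprS; ring.
Qed.

Section PowerIdeal.
Variables (R : comNzRingType) (a M : R).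

Definition in_ideal (k : nat) (x : R) : Prop :=
  exists y z : R, x = a ^+ k * y + M * z.

Lemma in_idealD k x y : in_ideal k x -> in_ideal k y -> in_ideal k (x + y).
Proof. by move=> [y1 [z1 ->]] [y2 [z2 ->]]; exists (y1 + y2), (z1 + z2); ring. Qed.

Lemma in_idealMr k x y : in_ideal k x -> in_ideal k (x * y).
Proof. by move=> [y1 [z1 ->]]; exists (y1 * y), (z1 * y); ring. Qed.

Lemma in_idealMn k x n : in_ideal k x -> in_ideal k (x *+ n).
Proof. by move=> Hx; rewrite -mulr_natr; apply: in_idealMr. Qed.

Lemma in_idealM m n x y : in_ideal m x -> in_ideal n y -> in_ideal (m + n) (x * y).
Proof.
move=> [y1 [z1 ->]] [y2 [z2 ->]].
by exists (y1 * y2), (z1 * (a ^+ n * y2 + M * z2) + a ^+ m * y1 * z2); rewrite exprD; ring.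
Qed.

Lemma in_ideal_pow k : in_ideal k (a ^+ k).
Proof. by exists 1, 0; ring. Qed.

Lemma in_ideal_weaken k k' x : (k' <= k)%N -> in_ideal k x -> in_ideal k' x.
Proof.
move=> Hk [y [z ->]]; exists (a ^+ (k - k') * y), z.
by rewrite mulrA -exprD subnKC.
Qed.

Lemma in_ideal_sum k n (F : 'I_n -> R) :
  (forall i, in_ideal k (F i)) -> in_ideal k (\sum_(i < n) F i).
Proof.
move=> HF; elim/big_ind: _ => //; last exact: in_idealD.
by exists 0, 0; ring.
Qed.

End PowerIdeal.

Section PrimeCongruences.
Variables (R : comNzRingType) (p : nat).
Hypothesis p_prime : prime p.

(* (-1)^p = -1 modulo p (trivially for odd p, and 1 = -1 + 2 for p = 2). *)
Lemma sign_exp_prime : exists d : R, (-1) ^+ p = -1 + p%:R * d.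
Proof.
have [->|p_odd] := even_prime p_prime; first by exists 1; ring.
by exists 0; rewrite -signr_odd p_odd; ring.
Qed.

Lemma sub1_exp_prime_pow (x : R) (j : nat) :
  exists A : R, (x - 1) ^+ (p ^ j) = x ^+ (p ^ j) - 1 + p%:R * A.
Proof.
elim: j => [|j [A IH]]; first by exists 0; rewrite expn0 !expr1; ring.
rewrite expnSr !exprM IH -addrA.
have [C1 ->] := exprD_prime (x ^+ (p ^ j)) (-1 + p%:R * A) p_prime.
have [C2 ->] := exprD_prime (-1) (p%:R * A) p_prime.
have [D ->] := sign_exp_prime.
have Hpp : (p%:R : R) ^+ p = p%:R * p%:R ^+ p.-1 by rewrite -exprS prednK ?prime_gt0.
rewrite exprMn Hpp.
exists (D + p%:R ^+ p.-1 * A ^+ p - C2 * (p%:R * A)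
        + x ^+ (p ^ j) * (-1 + p%:R * A) * C1).
ring.
Qed.

(* Since (y - 1)^p = (y^p - 1) - p (y - 1) B, each further p - 1 factors of
   y - 1 gain a factor p modulo y^p - 1. *)
Lemma sub1_exp_in_ideal (y : R) (k n : nat) : (1 + k * (p - 1) <= n)%N ->
  in_ideal p%:R (y ^+ p - 1) k ((y - 1) ^+ n).
Proof.
have [B HB] : exists B, (y - 1) ^+ p = (y ^+ p - 1) - p%:R * ((y - 1) * B).
  have [C HC] := exprD_prime (y - 1) 1 p_prime.
  by exists C; move: HC; rewrite subrK expr1n => ->; ring.
have Hp1 : (y - 1) * (y - 1) ^+ (p - 1) = (y - 1) ^+ p.
  by rewrite -exprS subn1 prednK ?prime_gt0.
have Hexact : exists C D, (y - 1) ^+ (1 + k * (p - 1)) =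
    p%:R ^+ k * (y - 1) * C + (y ^+ p - 1) * D.
  elim: k => [|k [C [D IH]]]; first by exists 1, 0; rewrite mul0n addn0; ring.
  exists (- (C * B)), (D * (y - 1) ^+ (p - 1) + p%:R ^+ k * C).
  rewrite mulSn addnCA exprD IH exprS.
  transitivity (p%:R ^+ k * C * ((y - 1) * (y - 1) ^+ (p - 1)) +
     (y ^+ p - 1) * D * (y - 1) ^+ (p - 1)); first by ring.
  by rewrite Hp1 HB; ring.
move=> Hn; have [C [D HCD]] := Hexact.
rewrite -(subnKC Hn) exprD HCD; apply: in_idealMr.
exists ((y - 1) * C), D; ring.
Qed.

(* Binomial expansion of (y - 1 + p A)^(beta(p-1)+1): the term with j factors
   p A needs only beta - j further factors p from the power of y - 1. *)
Lemma sub1_perturbed_exp_in_ideal (y A : R) (beta : nat) :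
  in_ideal p%:R (y ^+ p - 1) beta ((y - 1 + p%:R * A) ^+ (beta * (p - 1) + 1)).
Proof.
rewrite exprDn; apply: in_ideal_sum => j; apply: in_idealMn.
rewrite exprMn mulrCA.
have [le_beta_j|lt_j_beta] := leqP beta j.
  by apply: in_ideal_weaken le_beta_j _; apply/in_idealMr/in_ideal_pow.
rewrite -[beta in in_ideal _ _ beta](subnK (ltnW lt_j_beta)) mulrC.
apply: in_idealM; last exact: in_ideal_pow.
apply: in_idealMr; apply: sub1_exp_in_ideal.
have p_gt1 := prime_gt1 p_prime.
have Hj : (j <= j * (p - 1))%N by rewrite leq_pmulr // subn_gt0.
have Hs : ((beta - j) * (p - 1) + j * (p - 1) = beta * (p - 1))%N.
  by rewrite -mulnDl subnK // ltnW.
have := ltn_ord j; lia.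
Qed.

End PrimeCongruences.

Theorem theorem3p4 (p alpha beta : nat) (f : int -> int) :
  prime p -> (1 <= alpha)%N ->
  (forall x : int, f (x + (p ^ alpha)%:Z) = f x) ->
  forall x : int,
    (((p ^ beta)%:Z) %| Delta_iter ((beta * (p - 1) + 1) * p ^ (alpha - 1))%N f x)%Z.
Proof.
move=> Hp Ha Hf x; set q := (p ^ (alpha - 1))%N.
have Hqp : (q * p = p ^ alpha)%N by rewrite -expnSr subn1 prednK.
have [A HA] := sub1_exp_prime_pow Hp ('X : {poly int}) (alpha - 1).
have [Q [R HQR]] := sub1_perturbed_exp_in_ideal Hp ('X^q) A beta.
rewrite -HA -!exprM Hqp in HQR.
rewrite Delta_iter_pact [(_ * q)%N]mulnC HQR pactD pact_periodic // addr0.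
have -> : (p%:R ^+ beta : {poly int}) = ((p ^ beta)%:R : int)%:P.
  by rewrite -natrX rmorph_nat.
by rewrite pactC -natz dvdz_mulr.
Qed.
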